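(* For every $n\ge1$, among all pairs $(S,\sigma)$ with $S\subset\mathbb{Z}_{>0}$ finite of cardinality $n$ and $\sigma$ a permutation of $S$, the identity permutation of $S_n=\{1,\dots,n\}$ is the unique one minimizing $v(\sigma,\Psi)$.
   Context: Let $p$ be a prime and $y\in\mathbb{Z}_p$ not a non-negative integer, with $p$-adic digits $y=\sum_{n\ge0}y_np^n$, $0\le y_n<p$. Let $\pi,\theta$ be indeterminates and $\beta=\prod_{n\ge0}(1-\pi^{p^n}\theta)^{y_n}\in\mathbb{F}_p[[\pi]][[\theta]]$, written $\beta=\sum_{n\ge0}a_n\theta^n$; put $a_n=0$ for $n<0$. Let $\Psi$ be the $\mathbb{Z}_{>0}\times\mathbb{Z}_{>0}$ matrix with $\Psi_{m_1,m_2}=a_{pm_1-m_2}$. For a finite $S\subset\mathbb{Z}_{>0}$ and permutation $\sigma$ of $S$, $v(\sigma,\Psi)=\sum_{k\in S}v_\pi(\Psi_{k,\sigma(k)})\in\mathbb{Z}_{\ge0}\cup\{\infty\}$, where $v_\pi$ is the $\pi$-adic valuation with $v_\pi(0)=\infty$. *)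

From Stdlib Require Import ClassicalEpsilon.
From mathcomp Require Import all_boot all_order all_algebra.
From mathcomp Require Import finmap.
Set Implicit Arguments. Unset Strict Implicit. Unset Printing Implicit Defensive.
Import GRing.Theory.
Local Open Scope ring_scope.
Local Open Scope fset_scope.

(* Extended naturals Z_{>=0} \cup {oo}: None = oo. *)
Definition enat := option nat.
Definition eadd (a b : enat) : enat :=
  match a, b with Some x, Some y => Some (x + y)%N | _, _ => None end.
Definition elt (a b : enat) : bool :=
  match a, b with
  | Some x, Some y => (x < y)%N
  | Some _, None => true
  | None, _ => false
  end.

(* The p-adic integer y is given by its digit sequence yd (yd n < p). *)

(* Truncation of beta = prod_{n>=0} (1 - pi^{p^n} theta)^{y_n} to the
   factors n < N, as an element of F_p[pi][theta] : outer variable theta,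
   inner variable pi. *)
Definition beta_trunc (p : nat) (yd : nat -> nat) (N : nat) : {poly {poly 'F_p}} :=
  \prod_(n < N) (1 - ('X ^+ (p ^ n))%:P * 'X) ^+ (yd n).

(* Coefficient of pi^m in a_k (coefficient of theta^k in beta).  Factors with
   index n >= m+1 only affect pi-degrees >= p^n > m, so the truncation to
   m+1 factors gives the exact pi^m coefficient of the infinite product. *)
Definition acoef (p : nat) (yd : nat -> nat) (k m : nat) : 'F_p :=
  ((beta_trunc p yd m.+1)`_k)`_m.

Definition Psi (p : nat) (yd : nat -> nat) (m1 m2 : nat) (m : nat) : 'F_p :=
  if (m2 <= p * m1)%N then acoef p yd (p * m1 - m2) m else 0.

Definition vpi (p : nat) (f : nat -> 'F_p) : enat :=
  match excluded_middle_informative (exists m, f m != 0) with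
  | left H => Some (@ex_minn (fun m => f m != 0) H)
  | right _ => None
  end.

Definition vsig (p : nat) (yd : nat -> nat) (s : seq nat) (sigma : nat -> nat) : enat :=
  \big[eadd/Some 0%N]_(k <- s) vpi (Psi p yd k (sigma k)).

From Stdlib Require Import ClassicalEpsilon.
From mathcomp Require Import all_boot all_order all_algebra.
From mathcomp Require Import finmap zify.
Set Implicit Arguments. Unset Strict Implicit. Unset Printing Implicit Defensive.

(* The theta^k-coefficient a_k of beta has pi-adic valuation w(k), the least total
   pi-degree of k distinct factors (1 - pi^(p^n) theta), the degree p^n being available
   y_n times: the coefficient of that lowest monomial is a product of signed binomials
   binom(y_n, j) with y_n < p, nonzero mod p.  Hence v(sigma, Psi) is the sum of
   w(p k - sigma k) over k in S when sigma k <= p k for all k, and infinite otherwise.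
   The increments of w are nondecreasing powers of p which strictly increase over any p
   consecutive steps, each p^n occurring fewer than p times; so w is convex, strictly
   across gaps of length p.  Short-circuiting the largest element M of S out of its
   cycle in sigma therefore lowers the cost by at least w((p-1) M), strictly unless
   sigma fixes M, and induction on n shows that the identity of {1..n} is the unique
   minimiser. *)

Definition psum (s : nat -> nat) k := \sum_(i < k) s i.

Section PartialSums.

Variable s : nat -> nat.

Lemma psumS k : psum s k.+1 = psum s k + s k.
Proof. by rewrite /psum big_ord_recr. Qed.

Lemma psumD a l : psum s (a + l) = psum s a + \sum_(i < l) s (a + i).
Proof.
elim: l => [|l IHl]; first by rewrite addn0 big_ord0 addn0.
by rewrite addnS psumS IHl big_ord_recr addnA.
Qed.

Lemma psum_mono : {homo psum s : a b / a <= b}.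
Proof. by move=> a b /subnK <-; rewrite addnC psumD leq_addr. Qed.

Lemma psum_smono : (forall i, 0 < s i) -> {homo psum s : a b / a < b}.
Proof.
by move=> s_gt0 a b ab; apply: leq_trans (psum_mono ab); rewrite psumS -addn1 leq_add2l.
Qed.

Variable g : nat.
Hypothesis s_nondecr : {homo s : i j / i <= j}.
Hypothesis s_jump : forall i, s i < s (i + g).

Lemma psum_convex t u w z :
  t < u -> u + g <= z -> t + z = u + w -> psum s u + psum s w < psum s t + psum s z.
Proof.
move=> tu ugz tzuw.
have -> : u = t + (u - t) by lia.
have -> : z = w + (u - t) by lia.
rewrite !psumD -addnA ltn_add2l addnC ltn_add2l.
case: (u - t) (subn_gt0 t u) => [|l]; first by rewrite tu.
move=> _; rewrite !big_ord_recl !addn0 -addSn leq_add //.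
  by apply: (leq_trans (s_jump t)); apply: s_nondecr; lia.
by apply: leq_sum => i _; apply: s_nondecr; lia.
Qed.

End PartialSums.

Lemma exists_max_mem (r : seq nat) x : x \in r -> exists2 M, M \in r & {in r, forall k, k <= M}.
Proof.
move=> xr; have ub k : k \in r -> k <= \max_(j <- r) j by move=> kr; exact: leq_bigmax_seq.
by case: (ex_maxnP (ex_intro _ x xr) ub) => M rM M_max; exists M.
Qed.

(* Short-circuits [M] out of the cycle of [sg] through it. *)
Definition splice (M : nat) (sg : nat -> nat) k := if sg k == M then sg M else sg k.

Section Splice.

Variables (r : seq nat) (sg : nat -> nat) (M : nat).
Hypotheses (r_uniq : uniq r) (rM : M \in r).
Hypotheses (sg_mem : {in r, forall k, sg k \in r}) (sg_inj : {in r &, injective sg}).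

Lemma sg_neqM_of_preimage k : k \in rem M r -> sg k = M -> sg M != M.
Proof.
rewrite (mem_rem_uniq _ r_uniq) !inE => /andP[kM kr] skM; apply: contra kM => /eqP sMM.
by apply/eqP/sg_inj => //; rewrite skM sMM.
Qed.

Lemma splice_mem : {in rem M r, forall k, splice M sg k \in rem M r}.
Proof.
move=> k kr'; have kr : k \in r by move: kr'; rewrite (mem_rem_uniq _ r_uniq) !inE => /andP[].
rewrite /splice; case: eqVneq => skM; rewrite (mem_rem_uniq _ r_uniq) !inE.
  by rewrite (sg_neqM_of_preimage kr' skM) sg_mem.
by rewrite skM sg_mem.
Qed.

Lemma splice_inj : {in rem M r &, injective (splice M sg)}.
Proof.
move=> k1 k2; rewrite !(mem_rem_uniq _ r_uniq) !inE => /andP[/eqP k1M k1r] /andP[/eqP k2M k2r].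
rewrite /splice; case: eqVneq => s1; case: eqVneq => s2.
- by move=> _; apply: sg_inj => //; rewrite s1 s2.
- by move/sg_inj => /(_ rM k2r) k2E; case: k2M.
- by move/esym/sg_inj => /(_ rM k1r) k1E; case: k1M.
- exact: sg_inj.
Qed.

Lemma splice_fix : sg M = M -> {in rem M r, splice M sg =1 sg}.
Proof.
move=> sMM k kr'; rewrite /splice; case: eqVneq => // skM.
by have := sg_neqM_of_preimage kr' skM; rewrite sMM eqxx.
Qed.

Lemma sg_preimage : {in r, forall y, exists2 k, k \in r & sg k = y}.
Proof.
move=> y yr; suff /mapP[k kr ->] : y \in map sg r by exists k.
have sub_r : {subset map sg r <= r} by move=> _ /mapP[k kr ->]; exact: sg_mem.
have map_uniq : uniq (map sg r) by rewrite map_inj_in_uniq.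
have [|_ ->] // := uniq_min_size map_uniq sub_r.
by rewrite size_map.
Qed.

End Splice.

Section MinimalCost.

Variables (p : nat) (s : nat -> nat).
Hypotheses (p_gt1 : 1 < p) (s_gt0 : forall i, 0 < s i).
Hypotheses (s_nondecr : {homo s : i j / i <= j}) (s_jump : forall i, s i < s (i + p)).

Definition cost (r : seq nat) (sg : nat -> nat) := \sum_(k <- r) psum s (p * k - sg k).

Lemma cost_perm_id n r sg :
  perm_eq r (iota 1 n) -> {in r, sg =1 id} -> cost r sg = cost (iota 1 n) id.
Proof.
by move=> r_perm sg_id; rewrite /cost -(perm_big _ r_perm); apply: eq_big_seq => k /sg_id ->.
Qed.

Lemma cost_iotaS n : cost (iota 1 n.+1) id = cost (iota 1 n) id + psum s (p * n.+1 - n.+1).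
Proof. by rewrite /cost -{1}[n.+1]addn1 iotaD big_cat big_seq1 add1n. Qed.

Section SpliceCost.

Variables (r : seq nat) (sg : nat -> nat) (M : nat).
Hypotheses (r_uniq : uniq r) (rM : M \in r) (M_max : {in r, forall k, k <= M}).
Hypotheses (sg_mem : {in r, forall k, sg k \in r}) (sg_inj : {in r &, injective sg}).
Hypothesis sg_le : {in r, forall k, sg k <= p * k}.

Lemma splice_le : {in rem M r, forall k, splice M sg k <= p * k}.
Proof.
move=> k; rewrite (mem_rem_uniq _ r_uniq) !inE => /andP[_ kr].
rewrite /splice; case: eqVneq => [skM|_]; last exact: sg_le.
by apply: leq_trans (M_max (sg_mem rM)) _; rewrite -skM sg_le.
Qed.

Lemma cost_splice :
  cost (rem M r) (splice M sg) + psum s (p * M - M) <= cost r sg ?= iff (sg M == M).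
Proof.
have cost_r : cost r sg = psum s (p * M - sg M) + cost (rem M r) sg.
  by rewrite /cost (perm_big _ (perm_to_rem rM)) big_cons.
case: eqVneq => [sMM|sMM].
  suff -> : cost (rem M r) (splice M sg) = cost (rem M r) sg.
    by rewrite cost_r sMM addnC; exact: leqif_refl.
  by apply: eq_big_seq => k kr'; rewrite (splice_fix r_uniq rM sg_inj sMM kr').
apply/leqifP; have [ks ksr sksM] := sg_preimage r_uniq sg_mem sg_inj rM.
have ksM : ks != M by apply: contra_neq sMM => ksM; rewrite -{1}ksM.
have ksr' : ks \in rem M r by rewrite (mem_rem_uniq _ r_uniq) !inE ksM.
set r'' := rem ks (rem M r).
have splice_r'' : {in r'', splice M sg =1 sg}.
  move=> k; rewrite (mem_rem_uniq _ (rem_uniq _ r_uniq)) !inE => /andP[kks kr'].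
  rewrite /splice; case: eqVneq => // skM; case/eqP: kks; apply: sg_inj => //.
    by move: kr'; rewrite (mem_rem_uniq _ r_uniq) !inE => /andP[].
  by rewrite skM sksM.
have cost_r' sg' : cost (rem M r) sg' = psum s (p * ks - sg' ks) + cost r'' sg'.
  by rewrite /cost (perm_big _ (perm_to_rem ksr')) big_cons.
rewrite cost_r !cost_r'.
have -> : cost r'' (splice M sg) = cost r'' sg by apply: eq_big_seq => k /splice_r'' ->.
rewrite /splice sksM eqxx.
have sMM' : sg M < M by rewrite ltn_neqAle sMM M_max ?sg_mem.
have ks_lt : p * ks + p <= p * M.
  by rewrite addnC -mulnS leq_mul2l ltn_neqAle ksM M_max ?orbT.
have M_le : M <= p * ks by rewrite -sksM sg_le.
have M_pM : M <= p * M by rewrite leq_pmull //; lia.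
(* sending [ks] to [sg M] and fixing [M] beats [ks -> M -> sg M], by strict convexity *)
have := @psum_convex s p s_nondecr s_jump (p * ks - M) (p * ks - sg M) (p * M - M) (p * M - sg M).
lia.
Qed.

End SpliceCost.

Lemma cost_id_min n r sg :
  size r = n -> uniq r -> {in r, forall k, 0 < k} ->
  {in r, forall k, sg k \in r} -> {in r &, injective sg} -> {in r, forall k, sg k <= p * k} ->
  (perm_eq r (iota 1 n) /\ {in r, sg =1 id}) \/ cost (iota 1 n) id < cost r sg.
Proof.
elim: n r sg => [|n IHn] r sg r_size r_uniq r_pos sg_mem sg_inj sg_le.
  by left; move/size0nil: r_size => ->.
have [M rM M_max] : exists2 M, M \in r & {in r, forall k, k <= M}.
  by apply: (@exists_max_mem r (nth 0 r 0)); rewrite mem_nth // r_size.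
have n_lt_M : n < M.
  rewrite -r_size -(size_iota 1 M); apply: uniq_leq_size => // k kr.
  by rewrite mem_iota r_pos //= add1n ltnS M_max.
have [le_splice eq_splice] := cost_splice r_uniq rM M_max sg_mem sg_inj sg_le.
set r' := rem M r; set sg' := splice M sg.
have r'_size : size r' = n by rewrite size_rem // r_size.
have r'_pos : {in r', forall k, 0 < k} by move=> k /mem_rem /r_pos.
have IH := IHn r' sg' r'_size (rem_uniq M r_uniq) r'_pos
  (splice_mem r_uniq rM sg_mem sg_inj) (splice_inj r_uniq rM sg_inj)
  (splice_le r_uniq rM M_max sg_mem sg_le).
have IH_le : cost (iota 1 n) id <= cost r' sg'.
  by case: IH => [[r'_perm sg'_id]|/ltnW //]; rewrite (cost_perm_id r'_perm sg'_id).
have le_M : psum s (p * n.+1 - n.+1) <= psum s (p * M - M) by apply: psum_mono; nia.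
rewrite cost_iotaS; case: ltnP => [|cost_ge]; [by right | left].
have no_gap : ~ cost (iota 1 n) id + psum s (p * n.+1 - n.+1) < cost r' sg' + psum s (p * M - M).
  by move=> lt; have := leq_trans (leq_ltn_trans cost_ge lt) le_splice; rewrite ltnn.
have sMM : sg M = M.
  by apply/eqP; rewrite -eq_splice eqn_leq le_splice (leq_trans cost_ge (leq_add IH_le le_M)).
have eM : M = n.+1.
  apply/eqP; rewrite eqn_leq n_lt_M andbT leqNgt; apply/negP => M_gt; apply: no_gap.
  by rewrite -addnS leq_add // psum_smono //; nia.
have [[r'_perm sg'_id]|lt] := IH; last by case: no_gap; rewrite -addSn leq_add.
split.
  apply: perm_trans (perm_to_rem rM) _.
  by rewrite -{1}[n.+1]addn1 iotaD add1n -cat1s -eM perm_catC perm_cat2r.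
move=> k kr; case: (eqVneq k M) => [-> //|kM].
have kr' : k \in r' by rewrite (mem_rem_uniq _ r_uniq) !inE kM.
by rewrite -(splice_fix r_uniq rM sg_inj sMM kr'); exact: sg'_id.
Qed.

End MinimalCost.

Section DigitExponents.

Variable yd : nat -> nat.
Hypothesis yd_inf : forall N, exists n, N <= n /\ yd n <> 0.

Lemma psum_digits_unbounded x : exists N, x < psum yd N.+1.
Proof.
elim: x => [|x [N xN]].
  by have [n [_ yn]] := yd_inf 0; exists n; rewrite psumS; lia.
have [n [Nn yn]] := yd_inf N.+1; exists n; rewrite psumS.
by have := psum_mono yd Nn; lia.
Qed.

Definition expo i := ex_minn (psum_digits_unbounded i).

Lemma expo_lt_psum i : i < psum yd (expo i).+1.
Proof. by rewrite /expo; case: ex_minnP. Qed.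

Lemma expo_min i N : i < psum yd N.+1 -> expo i <= N.
Proof. by rewrite /expo; case: ex_minnP => k _ k_min /k_min. Qed.

Lemma psum_expo_le i : psum yd (expo i) <= i.
Proof.
case E: (expo i) => [|N]; first by rewrite /psum big_ord0.
by rewrite leqNgt; apply/negP => /expo_min; rewrite E ltnn.
Qed.

Lemma expo_mono : {homo expo : i j / i <= j}.
Proof. by move=> i j ij; apply: expo_min; apply: leq_ltn_trans ij (expo_lt_psum j). Qed.

Lemma expo_eq N i : psum yd N <= i < psum yd N.+1 -> expo i = N.
Proof.
case/andP=> Ni iN; apply/eqP; rewrite eqn_leq expo_min //= leqNgt; apply/negP => lt.
by have := leq_trans (expo_lt_psum i) (psum_mono yd lt); rewrite ltnNge Ni.
Qed.

Lemma expo_lt N i : i < psum yd N -> expo i < N.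
Proof. by case: N => [|N]; [rewrite /psum big_ord0 | move/expo_min]. Qed.

Section DigitWeights.

Variable p : nat.
Hypotheses (p_gt1 : 1 < p) (yd_lt : forall n, yd n < p).

Lemma expo_jump i : expo i < expo (i + p).
Proof.
rewrite ltnNge; apply/negP => le.
have := psum_mono yd (le : (expo (i + p)).+1 <= (expo i).+1); rewrite [X in _ <= X]psumS.
by have := psum_expo_le i; have := expo_lt_psum (i + p); have := yd_lt (expo i); lia.
Qed.

(* [wt i] is the [i]-th (from 0) smallest factor degree [p ^ n] of [beta], each counted
   [yd n] times, so [psum wt k] is the least [pi]-degree of a product of [k] factors. *)
Definition wt i := p ^ expo i.

Lemma wt_gt0 i : 0 < wt i.
Proof. by rewrite expn_gt0 ltnW. Qed.

Lemma wt_nondecr : {homo wt : i j / i <= j}.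
Proof. by move=> i j /expo_mono; apply: leq_pexp2l; rewrite ltnW. Qed.

Lemma wt_jump i : wt i < wt (i + p).
Proof. by rewrite ltn_exp2l // expo_jump. Qed.

Lemma psum_wt_block N k : k <= psum yd N.+1 ->
  psum wt k = psum wt (minn k (psum yd N)) + p ^ N * (k - minn k (psum yd N)).
Proof.
move=> kN; case: (leqP k (psum yd N)) => Nk; first by rewrite subnn muln0 addn0.
rewrite -{1}(subnKC (ltnW Nk)) psumD (eq_bigr (fun _ => p ^ N)).
  by rewrite sum_nat_const card_ord mulnC.
by move=> i _; rewrite /wt (@expo_eq N) //; have := ltn_ord i; lia.
Qed.

Lemma psum_wt_lt N i k : i < psum yd N -> i < k <= psum yd N.+1 ->
  psum wt k < psum wt i + p ^ N * (k - i).
Proof.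
move=> iN /andP[ik kN]; rewrite -{1}(subnKC (ltnW ik)) psumD ltn_add2l.
case E: (k - i) => [|l]; first by move: ik; rewrite -subn_gt0 E.
rewrite big_ord_recl mulnS -addSn leq_add //.
  by rewrite addn0 ltn_exp2l // expo_lt.
have -> : p ^ N * l = \sum_(j < l) p ^ N by rewrite sum_nat_const card_ord mulnC.
apply: leq_sum => j _; apply: leq_pexp2l; first by rewrite ltnW.
by apply: expo_min; rewrite lift0; have := ltn_ord j; lia.
Qed.

End DigitWeights.

End DigitExponents.

Import GRing.Theory.
Local Open Scope ring_scope.

Section PolyValuation.

Variable R : nzRingType.
Implicit Types (q r : {poly R}) (v w : nat).

Definition pval_ge q v := forall m, (m < v)%N -> q`_m = 0.
Definition pval_eq q v := pval_ge q v /\ q`_v != 0.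

Lemma pval_ge_le q v w : pval_ge q v -> (w <= v)%N -> pval_ge q w.
Proof. by move=> qv wv m mw; apply: qv; apply: leq_trans mw wv. Qed.

Lemma pval_ge_sum (I : Type) (s : seq I) (P : pred I) (F : I -> {poly R}) v :
  (forall i, P i -> pval_ge (F i) v) -> pval_ge (\sum_(i <- s | P i) F i) v.
Proof.
move=> Fv; apply: (big_ind (pval_ge^~ v)) => //; first by move=> m _; rewrite coef0.
by move=> q r qv rv m mv; rewrite coefD qv ?rv ?addr0.
Qed.

Lemma pval_geM q r v w : pval_ge q v -> pval_ge r w -> pval_ge (q * r) (v + w).
Proof.
move=> qv rw m mvw; rewrite coefM big1 // => i _.
case: (ltnP i v) => iv; first by rewrite qv ?mul0r.
by rewrite rw ?mulr0 //; have := ltn_ord i; lia.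
Qed.

Lemma pval_eqD q r v : pval_eq q v -> pval_ge r v.+1 -> pval_eq (q + r) v.
Proof.
move=> [qv qv0] rv; split; last by rewrite coefD rv ?addr0.
by move=> m mv; rewrite coefD qv ?rv ?addr0 //; apply: ltnW.
Qed.

Lemma coef_CXn (c : R) e m : (c%:P * 'X^e)`_m = if m == e then c else 0.
Proof. by rewrite coefCM coefXn; case: eqP; rewrite ?mulr1 ?mulr0. Qed.

Lemma pval_ge_CXn (c : R) e : pval_ge (c%:P * 'X^e) e.
Proof. by move=> m me; rewrite coef_CXn ltn_eqF. Qed.

Lemma pval_eq_CXn (c : R) e : c != 0 -> pval_eq (c%:P * 'X^e) e.
Proof. by move=> c0; split; [exact: pval_ge_CXn | rewrite coef_CXn eqxx]. Qed.

End PolyValuation.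

Lemma pval_eqM (R : idomainType) (q r : {poly R}) v w :
  pval_eq q v -> pval_eq r w -> pval_eq (q * r) (v + w).
Proof.
move=> [qv qv0] [rw rw0]; split; first exact: pval_geM.
have v_lt : (v < (v + w).+1)%N by rewrite ltnS leq_addr.
rewrite coefM (bigD1 (Ordinal v_lt)) //= addKn big1 ?addr0 ?mulf_neq0 //.
move=> i /eqP iv; have {}iv : nat_of_ord i != v by apply/eqP => e; apply: iv; exact: val_inj.
case: (ltnP i v) => vi; first by rewrite qv ?mul0r.
by rewrite rw ?mulr0 //; have := ltn_ord i; move: iv vi; lia.
Qed.

Lemma coef_exp_1subCX (R : comNzRingType) (c : R) y j :
  ((1 - c%:P * 'X) ^+ y)`_j = (- c) ^+ j *+ 'C(y, j).
Proof.
rewrite addrC -mulNr -polyCN exprD1n coef_sum.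
under eq_bigr => i _ do rewrite coefMn exprMn -rmorphXn /= coefCM coefXn.
case: (ltnP j y.+1) => jy; last first.
  rewrite big1 ?bin_small ?mulr0n // => i _.
  by rewrite (gtn_eqF (leq_trans (ltn_ord i) jy)) mulr0 mul0rn.
rewrite (bigD1 (Ordinal jy)) //= big1 ?addr0 ?eqxx ?mulr1 // => i /eqP ij.
rewrite (_ : (j == i) = false) ?mulr0 ?mul0rn //.
by apply/negbTE/eqP => ji; apply: ij; exact: val_inj.
Qed.

Lemma prime_ndvd_fact p y : prime p -> (y < p)%N -> ~~ (p %| y`!)%N.
Proof.
move=> p_prime; elim: y => [|y IHy] yp; first by rewrite fact0 dvdn1 gtn_eqF ?prime_gt1.
rewrite factS Euclid_dvdM // negb_or IHy ?(ltnW yp) // andbT.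
by apply/negP => /(dvdn_leq (ltn0Sn y)); rewrite leqNgt yp.
Qed.

Lemma signed_bin_neq0 p y j :
  prime p -> (y < p)%N -> (j <= y)%N -> ((-1) ^+ j *+ 'C(y, j) : 'F_p) != 0.
Proof.
move=> p_prime yp jy; rewrite -mulr_natr mulf_neq0 ?signr_eq0 //.
rewrite -(dvdn_pcharf (pchar_Fp p_prime)); apply: contra (prime_ndvd_fact p_prime yp).
by rewrite -(bin_fact jy); exact: dvdn_mulr.
Qed.

Lemma vpi_Some p (f : nat -> 'F_p) v :
  (forall m, (m < v)%N -> f m = 0) -> f v != 0 -> vpi f = Some v.
Proof.
move=> f_lt fv; rewrite /vpi; case: excluded_middle_informative => [f_ne0|]; last first.
  by case; exists v.
congr Some; case: ex_minnP => m fm m_min; apply/eqP; rewrite eqn_leq m_min //=.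
by rewrite leqNgt; apply/negP => /f_lt fm0; rewrite fm0 eqxx in fm.
Qed.

Lemma vpi_None p (f : nat -> 'F_p) : (forall m, f m = 0) -> vpi f = None.
Proof.
move=> f0; rewrite /vpi; case: excluded_middle_informative => // f_ne0.
by exfalso; case: f_ne0 => m; rewrite f0 eqxx.
Qed.

Section BetaCoefficients.

Variables (p : nat) (yd : nat -> nat).
Hypotheses (p_prime : prime p) (yd_lt : forall n, (yd n < p)%N).
Hypothesis yd_inf : forall N, exists n, (N <= n)%N /\ yd n <> 0%N.

Let p_gt1 := prime_gt1 p_prime.
Local Notation beta := (beta_trunc p yd).
Local Notation wt := (wt yd_inf p).

Definition beta_factor N : {poly {poly 'F_p}} := (1 - ('X^(p ^ N))%:P * 'X) ^+ yd N.

Lemma beta_truncS N : beta N.+1 = beta N * beta_factor N.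
Proof. by rewrite /beta_trunc big_ord_recr. Qed.

Lemma coef_beta_factor N j :
  (beta_factor N)`_j = ((-1) ^+ j *+ 'C(yd N, j))%:P * 'X^(p ^ N * j).
Proof.
by rewrite coef_exp_1subCX [in LHS]exprNn -exprM polyCMn rmorphXn /= polyCN polyC1 mulrnAl.
Qed.

Lemma coef_beta_factor_eq0 N j : (yd N < j)%N -> (beta_factor N)`_j = 0.
Proof. by move=> yj; rewrite coef_beta_factor bin_small // mulr0n polyC0 mul0r. Qed.

Lemma pval_eq_beta_factor N j : (j <= yd N)%N -> pval_eq ((beta_factor N)`_j) (p ^ N * j).
Proof. by move=> jy; rewrite coef_beta_factor; apply: pval_eq_CXn; rewrite signed_bin_neq0. Qed.

Lemma pval_ge_beta_factor N j : pval_ge ((beta_factor N)`_j) (p ^ N * j).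
Proof. by rewrite coef_beta_factor; apply: pval_ge_CXn. Qed.

Lemma coef_beta_trunc_eq0 N k : (psum yd N < k)%N -> (beta N)`_k = 0.
Proof.
elim: N k => [|N IHN] k; first by rewrite /beta_trunc big_ord0 coef1; case: k.
rewrite psumS beta_truncS coefM => Nk; rewrite big1 // => i _.
case: (ltnP (psum yd N) i) => iN; first by rewrite IHN ?mul0r.
by rewrite coef_beta_factor_eq0 ?mulr0 //; have := ltn_ord i; lia.
Qed.

Lemma pval_beta_trunc N k : (k <= psum yd N)%N -> pval_eq ((beta N)`_k) (psum wt k).
Proof.
elim: N k => [|N IHN] k kN.
  have -> : k = 0%N by move: kN; rewrite /psum big_ord0; case: k.
  rewrite /beta_trunc /psum !big_ord0 !coef1 /=.
  by split=> [//|]; rewrite coef1 eqxx oner_neq0.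
set i0 := minn k (psum yd N).
have i0k : (i0 < k.+1)%N by rewrite ltnS geq_minl.
rewrite beta_truncS coefM (bigD1 (Ordinal i0k)) //=; apply: pval_eqD.
  rewrite (psum_wt_block yd_inf p_gt1 kN); apply: pval_eqM; first exact/IHN/geq_minr.
  by apply: pval_eq_beta_factor; move: kN; rewrite psumS /i0; lia.
apply: pval_ge_sum => i /eqP iNi0.
case: (ltnP (psum yd N) i) => iN.
  by rewrite coef_beta_trunc_eq0 ?mul0r // => m _; rewrite coef0.
have i_lt : (i < i0)%N.
  have ii0 : nat_of_ord i != i0 by apply/eqP => e; apply: iNi0; exact: val_inj.
  by rewrite ltn_neqAle ii0 leq_min -ltnS ltn_ord.
apply: pval_ge_le (pval_geM (IHN _ iN).1 (@pval_ge_beta_factor N (k - i))) _.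
by apply: (psum_wt_lt yd_inf p_gt1); move: i_lt kN; rewrite /i0 ?psumS; lia.
Qed.

Lemma coef_beta_truncS_low N k m :
  (m < p ^ N)%N -> ((beta N.+1)`_k)`_m = ((beta N)`_k)`_m.
Proof.
move=> mN; rewrite beta_truncS coefM big_ord_recr /= subnn coefD.
have -> : (beta_factor N)`_0 = 1.
  by rewrite coef_beta_factor bin0 expr0 mulr1n polyC1 mul1r muln0 expr0.
rewrite mulr1 (@pval_ge_sum _ _ _ _ _ (p ^ N)) ?add0r // => i _.
apply: pval_ge_le (pval_geM (v := 0%N) _ (@pval_ge_beta_factor N (k - i))) _ => //.
by rewrite add0n leq_pmulr // subn_gt0 ltn_ord.
Qed.

Lemma coef_beta_trunc_stable N N' k m :
  (N <= N')%N -> (m < p ^ N)%N -> ((beta N')`_k)`_m = ((beta N)`_k)`_m.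
Proof.
move=> /subnK <- mN; elim: (N' - N)%N => [//|d IHd].
rewrite addSn coef_beta_truncS_low ?IHd //; apply: leq_trans mN _.
by apply: leq_pexp2l; [exact: ltnW | exact: leq_addl].
Qed.

Lemma acoef_pval x :
  (forall m, (m < psum wt x)%N -> acoef p yd x m = 0) /\ acoef p yd x (psum wt x) != 0.
Proof.
have [N0 xN0] := psum_digits_unbounded yd_inf x.
set N := maxn N0.+1 (psum wt x).+1.
have acoefE m : (m < N)%N -> acoef p yd x m = ((beta N)`_x)`_m.
  move=> mN; rewrite /acoef (coef_beta_trunc_stable x mN) //.
  exact: ltn_trans (ltnSn m) (ltn_expl _ p_gt1).
have xN : (x <= psum yd N)%N.
  by apply: leq_trans (ltnW xN0) (psum_mono _ (leq_maxl _ _)).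
have [val_ge val_ne0] := pval_beta_trunc xN.
have wtN : (psum wt x < N)%N by rewrite leq_max ltnSn orbT.
split=> [m m_lt|]; last by rewrite acoefE.
by rewrite acoefE ?val_ge // (ltn_trans m_lt wtN).
Qed.

Lemma vpi_Psi k j : (j <= p * k)%N -> vpi (Psi p yd k j) = Some (psum wt (p * k - j)).
Proof.
move=> jk; have [acoef_lt acoef_ne0] := acoef_pval (p * k - j).
by apply: vpi_Some => [m m_lt|]; rewrite /Psi jk; [exact: acoef_lt | exact: acoef_ne0].
Qed.

Lemma vpi_Psi_None k j : (p * k < j)%N -> vpi (Psi p yd k j) = None.
Proof. by move=> kj; apply: vpi_None => m; rewrite /Psi leqNgt kj. Qed.

Lemma vsig_cost r sg :
  {in r, forall k, sg k <= p * k}%N -> vsig p yd r sg = Some (cost p wt r sg).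
Proof.
move=> sg_le; rewrite /vsig (eq_big_seq (fun k => Some (psum wt (p * k - sg k)))).
  by rewrite -(@big_morph _ _ Some (Some 0%N) eadd 0%N addn).
by move=> k /sg_le /vpi_Psi.
Qed.

Lemma vsig_None r sg k : k \in r -> (p * k < sg k)%N -> vsig p yd r sg = None.
Proof.
move=> kr k_gt; elim: r kr => [//|x r IHr]; rewrite inE /vsig big_cons -/(vsig p yd r sg).
case/orP=> [/eqP <-|/IHr ->]; first by rewrite vpi_Psi_None.
by case: vpi.
Qed.

End BetaCoefficients.

Local Close Scope ring_scope.
Local Open Scope fset_scope.
Unset Implicit Arguments.

Theorem corollary5p8 (p : nat) (yd : nat -> nat)
  (hp : prime p)
  (hdig : forall n, (yd n < p)%N)
  (hnotnat : forall N, exists n, (N <= n)%N /\ yd n <> 0%N)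
  (n : nat) (hn : (1 <= n)%N) :
  forall (S : {fset nat}) (sigma : nat -> nat),
    (forall k, k \in S -> (0 < k)%N) ->
    #|` S| = n ->
    {in S, forall k, sigma k \in S} ->
    {in S &, injective sigma} ->
    ((forall k, (k \in S) = (k \in iota 1 n)) /\ {in S, forall k, sigma k = k})
    \/ elt (vsig p yd (iota 1 n) id) (vsig p yd (enum_fset S) sigma).
Proof.
move=> S sg S_pos S_card sg_mem sg_inj.
have p_gt1 := prime_gt1 hp.
have id_cost : vsig p yd (iota 1 n) id = Some (cost p (wt hnotnat p) (iota 1 n) id).
  by apply: vsig_cost => // k _; rewrite leq_pmull // ltnW.
case: (boolP (all (fun k => sg k <= p * k) (enum_fset S))) => [/allP sg_le|/allPn [k kS]].
  rewrite id_cost vsig_cost //.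
  have [[S_perm sg_id]|] := cost_id_min p_gt1 (wt_gt0 hnotnat p_gt1) (wt_nondecr hnotnat p_gt1)
    (wt_jump hnotnat p_gt1 hdig) S_card (fset_uniq S) S_pos sg_mem sg_inj sg_le; last by right.
  by left; split=> // k; exact: (perm_mem S_perm k).
by rewrite -ltnNge => k_gt; right; rewrite id_cost (vsig_None yd kS k_gt).
Qed.
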